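(* Let $(\alpha,\theta)\in\Omega$. Let $\varphi$ be the solution of $\varphi'^2=P_{\alpha,\theta}(\cos\varphi)$ such that $\varphi(0)=0$ and $\varphi'(0)\le0$. Then: 1. $\varphi'(u)<0$ for all $u$; 2. $\varphi$ is a decreasing bijection from $\mathbb{R}$ onto $\mathbb{R}$; 3. there exists a real number $U>0$ such that $\varphi(u+U)=\varphi(u)-\pi$ for all $u\in\mathbb{R}$; 4. $\varphi$ is odd.
   Context: For $\alpha>0$ and $\theta\in\mathbb{R}$ set $C_{\alpha,\theta}=\frac{\sin(2\theta)}{2\alpha}$ and $P_{\alpha,\theta}(x)=\alpha^2+\cos(2\theta)x^2-C_{\alpha,\theta}^2x^4$. Let $\theta^+_\alpha=\pi/2$ if $\alpha>1$, and $\theta^+_\alpha=\frac12\arccos(1-2\alpha^2)$ if $\alpha\le1$. Set $\Omega=\{(\alpha,\theta)\in\mathbb{R}^2:\alpha>0,\ -\theta^+_\alpha<\theta<\theta^+_\alpha\}$. *)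

From Stdlib Require Import Reals Lra.
From Coquelicot Require Import Coquelicot.
Open Scope R_scope.

Definition C_at (alpha theta : R) : R := sin (2 * theta) / (2 * alpha).

Definition P_at (alpha theta x : R) : R :=
  alpha ^ 2 + cos (2 * theta) * x ^ 2 - (C_at alpha theta) ^ 2 * x ^ 4.

Definition theta_plus (alpha : R) : R :=
  if Rlt_dec 1 alpha then PI / 2 else / 2 * acos (1 - 2 * alpha ^ 2).

Definition Omega (alpha theta : R) : Prop :=
  0 < alpha /\ - theta_plus alpha < theta < theta_plus alpha.

From Stdlib Require Import Reals Lra.
From Coquelicot Require Import Coquelicot.
Open Scope R_scope.

(* For (alpha, theta) in Omega, P_{alpha,theta} is bounded below on [-1, 1] by
   some m > 0, so phi'^2 >= m and phi' never vanishes; by Darboux's theorem phi'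
   keeps the sign of phi'(0), whence phi' <= -sqrt m and phi is a decreasing
   bijection of R.  Such steep solutions of phi'^2 = P(cos phi) are determined by
   their value at 0: P o cos is Lipschitz and two slopes <= -d differ by at most
   |difference of their squares| / 2d, so Gronwall applies to (phi - psi)^2.
   As P(cos y) is invariant under y |-> y + pi and y |-> -y, both
   u |-> phi(u + U) + pi (where phi(U) = -pi) and u |-> -phi(-u) are steep
   solutions vanishing at 0, hence equal to phi. *)

Lemma is_derive_shift_add (f : R -> R) (df U c u : R) :
  is_derive f (u + U) df -> is_derive (fun t => f (t + U) + c) u df.
Proof.
  intros Hf.
  assert (Hs : is_derive (fun t => t + U) u 1) by (auto_derive; auto; ring).
  pose proof (is_derive_comp f _ u df 1 Hf Hs) as H.
  rewrite <- (Rplus_0_r df).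
  apply (is_derive_plus (fun t => f (t + U)) (fun _ => c)); [|apply (is_derive_const c)].
  replace df with (scal 1 df) by (cbn; unfold mult; cbn; ring).
  exact H.
Qed.

Lemma is_derive_comp_opp (f : R -> R) (df u : R) :
  is_derive f (- u) df -> is_derive (fun t => f (- t)) u (- df).
Proof.
  intros Hf.
  assert (Hs : is_derive (fun t => - t) u (-1)) by (auto_derive; auto; ring).
  pose proof (is_derive_comp f _ u df (-1) Hf Hs) as H.
  replace (- df) with (scal (-1) df) by (cbn; unfold mult; cbn; ring).
  exact H.
Qed.

Lemma is_derive_opp_comp_opp (f : R -> R) (df u : R) :
  is_derive f (- u) df -> is_derive (fun t => - f (- t)) u df.
Proof.
  intros Hf. rewrite <- (Ropp_involutive df).
  apply (is_derive_opp (fun t => f (- t))), is_derive_comp_opp, Hf.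
Qed.

Lemma derive_descent (f : R -> R) (a l : R) :
  derivable_pt_lim f a l -> exists delta, 0 < delta /\
  forall h, h <> 0 -> Rabs h < delta -> l * h < 0 -> f (a + h) < f a.
Proof.
  intros Hf.
  destruct (Req_dec l 0) as [Hl|Hl].
  { exists 1. split; [lra|]. intros h _ _ Hlh. subst l. lra. }
  destruct (Hf (Rabs l) (Rabs_pos_lt l Hl)) as [delta Hq].
  exists delta. split; [apply cond_pos|]. intros h Hh Hhd Hlh.
  specialize (Hq h Hh Hhd).
  set (q := (f (a + h) - f a) / h) in Hq.
  assert (Eq : f (a + h) - f a = q * h) by (unfold q; field; exact Hh).
  (* [q] lies within [|l|] of [l], so [q] and [l] have the same sign *)
  assert (Hql : 0 < q * l).
  { apply Rsqr_lt_abs_1 in Hq. unfold Rsqr in Hq. nra. }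
  assert (q * h < 0) by nra.
  lra.
Qed.

Lemma derive_root_between (f df : R -> R) (a b : R) :
  (forall u, is_derive f u (df u)) -> a < b -> df a < 0 -> 0 < df b ->
  exists c, a < c < b /\ df c = 0.
Proof.
  intros Hf Hab Ha Hb.
  assert (Hl : forall u, derivable_pt_lim f u (df u)) by (intros u; apply is_derive_Reals, Hf).
  (* a minimum of [f] on [a, b] is interior, since [f] decreases from [a] and increases into [b] *)
  destruct (continuity_ab_min f a b) as [c [Hmin Hc]]; [lra| |].
  { intros x _. apply (derivable_continuous_pt f x (exist _ (df x) (Hl x))). }
  assert (Hac : a < c).
  { destruct (Rle_lt_or_eq_dec a c (proj1 Hc)) as [H|<-]; [exact H|exfalso].
    destruct (derive_descent f a (df a) (Hl a)) as [delta [Hdelta Hdesc]].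
    set (h := Rmin (delta / 2) (b - a)).
    assert (0 < h) by (apply Rmin_glb_lt; lra).
    assert (h <= delta / 2) by apply Rmin_l. assert (h <= b - a) by apply Rmin_r.
    assert (f (a + h) < f a) by (apply Hdesc; [lra | rewrite Rabs_pos_eq; lra | nra]).
    assert (f a <= f (a + h)) by (apply Hmin; lra).
    lra. }
  assert (Hcb : c < b).
  { destruct (Rle_lt_or_eq_dec c b (proj2 Hc)) as [H| ->]; [exact H|exfalso].
    destruct (derive_descent f b (df b) (Hl b)) as [delta [Hdelta Hdesc]].
    set (h := Rmin (delta / 2) (b - a)).
    assert (0 < h) by (apply Rmin_glb_lt; lra).
    assert (h <= delta / 2) by apply Rmin_l. assert (h <= b - a) by apply Rmin_r.
    assert (f (b + - h) < f b) by (apply Hdesc; [lra | rewrite Rabs_Ropp, Rabs_pos_eq; lra | nra]).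
    assert (f b <= f (b + - h)) by (apply Hmin; lra).
    lra. }
  exists c. split; [lra|].
  apply (deriv_minimum f a b c (exist _ (df c) (Hl c)) Hac Hcb).
  intros x Hx1 Hx2. apply Hmin. lra.
Qed.

Lemma derive_neg_everywhere (f df : R -> R) (a : R) :
  (forall u, is_derive f u (df u)) -> (forall u, df u <> 0) -> df a < 0 ->
  forall u, df u < 0.
Proof.
  intros Hf Hnz Ha u.
  destruct (Rlt_or_le (df u) 0) as [Hu|Hu]; [exact Hu|exfalso].
  assert (Hpos : 0 < df u) by (destruct Hu as [|E]; [assumption | now destruct (Hnz u)]).
  destruct (Rtotal_order a u) as [Hau|[<-|Hua]].
  - destruct (derive_root_between f df a u Hf Hau Ha Hpos) as [c [_ Hc]].
    exact (Hnz c Hc).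
  - lra.
  - assert (Hf' : forall t, is_derive (fun t => - f t) t (- df t))
      by (intros t; apply (is_derive_opp f), Hf).
    destruct (derive_root_between _ _ u a Hf' Hua ltac:(lra) ltac:(lra)) as [c [_ Hc]].
    apply (Hnz c). lra.
Qed.

Lemma neg_le_neg_sqrt (x m : R) : x < 0 -> m <= x ^ 2 -> x <= - sqrt m.
Proof.
  intros Hx Hm. pose proof (sqrt_le_1_alt _ _ Hm) as Hs.
  rewrite <- Rsqr_pow2, sqrt_Rsqr_abs, Rabs_left in Hs by exact Hx. lra.
Qed.

Lemma derive_steep (f df : R -> R) (m a : R) :
  (forall u, is_derive f u (df u)) -> 0 < m -> (forall u, m <= df u ^ 2) -> df a <= 0 ->
  forall u, df u <= - sqrt m.
Proof.
  intros Hf Hm Hsq Ha.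
  assert (Hnz : forall u, df u <> 0).
  { intros u E. specialize (Hsq u). rewrite E in Hsq. simpl in Hsq. lra. }
  intros u. apply neg_le_neg_sqrt; [|apply Hsq].
  apply (derive_neg_everywhere f df a Hf Hnz).
  destruct Ha as [|E]; [assumption | now destruct (Hnz a)].
Qed.

Lemma steep_slope (f df : R -> R) (d : R) :
  (forall u, is_derive f u (df u)) -> (forall u, df u <= - d) ->
  forall u v, u <= v -> f v - f u <= - d * (v - u).
Proof.
  intros Hf Hd u v [Huv| <-]; [|lra].
  destruct (MVT_cor2 f df u v Huv) as [c [Hc _]].
  { intros c _. apply is_derive_Reals, Hf. }
  specialize (Hd c). nra.
Qed.

Lemma steep_surjective (f df : R -> R) (d : R) :
  0 < d -> (forall u, is_derive f u (df u)) -> (forall u, df u <= - d) ->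
  forall y, exists u, f u = y.
Proof.
  intros Hd Hf Hdf y.
  set (r := Rabs (y - f 0) / d).
  assert (Hr : 0 <= r) by (apply Rdiv_le_0_compat; [apply Rabs_pos | exact Hd]).
  assert (Hdr : d * r = Rabs (y - f 0)) by (unfold r; field; lra).
  pose proof (steep_slope f df d Hf Hdf (- r) 0 ltac:(lra)) as Hleft.
  pose proof (steep_slope f df d Hf Hdf 0 r Hr) as Hright.
  pose proof (Rle_abs (y - f 0)). pose proof (Rle_abs (- (y - f 0))).
  rewrite Rabs_Ropp in *.
  assert (Hcont : continuity (fun t => f t - y)).
  { intros t. apply continuity_pt_minus; [|apply continuity_pt_const; intros ? ?; reflexivity].
    apply (derivable_continuous_pt f t), (exist _ (df t)), is_derive_Reals, Hf. }
  destruct (IVT_cor (fun t => f t - y) (- r) r Hcont ltac:(lra)) as [u [_ Hu]].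
  { assert (0 <= f (- r) - y) by nra. assert (f r - y <= 0) by nra. nra. }
  exists u. lra.
Qed.

Lemma gronwall_zero_right (D dD : R -> R) (L : R) :
  (forall t, is_derive D t (dD t)) -> (forall t, 0 <= D t) ->
  (forall t, dD t <= L * D t) -> D 0 = 0 ->
  forall t, 0 <= t -> D t = 0.
Proof.
  intros HD Hpos Hle H0 t Ht.
  destruct Ht as [Ht| <-]; [|exact H0].
  (* [D t * exp (- L t)] is nonincreasing, nonnegative and vanishes at [0] *)
  set (k := fun s => D s * exp (- L * s)).
  set (dk := fun s => (dD s - L * D s) * exp (- L * s)).
  assert (Hk : forall s, derivable_pt_lim k s (dk s)).
  { intros s. apply is_derive_Reals. unfold k, dk.
    assert (He : is_derive (fun s => exp (- L * s)) s (- L * exp (- L * s)))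
      by (auto_derive; auto; ring).
    replace ((dD s - L * D s) * exp (- L * s))
      with (dD s * exp (- L * s) + D s * (- L * exp (- L * s))) by ring.
    apply (is_derive_mult D (fun s => exp (- L * s))); auto.
    intros; apply Rmult_comm. }
  destruct (MVT_cor2 k dk 0 t Ht (fun c _ => Hk c)) as [c [Hc _]].
  assert (dk c <= 0).
  { unfold dk. pose proof (exp_pos (- L * c)). specialize (Hle c). nra. }
  unfold k in Hc. rewrite H0, Rmult_0_l in Hc.
  pose proof (exp_pos (- L * t)). pose proof (Hpos t).
  nra.
Qed.

Lemma gronwall_zero (D dD : R -> R) (L : R) :
  (forall t, is_derive D t (dD t)) -> (forall t, 0 <= D t) ->
  (forall t, Rabs (dD t) <= L * D t) -> D 0 = 0 ->
  forall t, D t = 0.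
Proof.
  intros HD Hpos Hle H0 t.
  destruct (Rle_or_lt 0 t) as [Ht|Ht].
  - apply (gronwall_zero_right D dD L); auto.
    intros s. pose proof (Rle_abs (dD s)). specialize (Hle s). lra.
  - replace t with (- - t) by ring.
    apply (gronwall_zero_right (fun s => D (- s)) (fun s => - dD (- s)) L);
      [| auto | | rewrite Ropp_0; exact H0 | lra].
    + intros s. apply is_derive_comp_opp, HD.
    + intros s. pose proof (Rle_abs (- dD (- s))). rewrite Rabs_Ropp in *.
      specialize (Hle (- s)). lra.
Qed.

Lemma neg_sqr_gap (a b d : R) :
  0 <= d -> a <= - d -> b <= - d -> 2 * d * Rabs (a - b) <= Rabs (a ^ 2 - b ^ 2).
Proof.
  intros Hd Ha Hb.
  replace (a ^ 2 - b ^ 2) with ((a - b) * (a + b)) by ring.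
  rewrite Rabs_mult, (Rabs_left1 (a + b)) by lra.
  pose proof (Rabs_pos (a - b)).
  assert (0 <= Rabs (a - b) * (- (a + b) - 2 * d)) by (apply Rmult_le_pos; lra).
  lra.
Qed.

Lemma steep_solutions_unique (Q : R -> R) (K d : R) (f df g dg : R -> R) :
  0 < d -> (forall x y, Rabs (Q x - Q y) <= K * Rabs (x - y)) ->
  (forall u, is_derive f u (df u)) -> (forall u, is_derive g u (dg u)) ->
  (forall u, df u <= - d) -> (forall u, dg u <= - d) ->
  (forall u, df u ^ 2 = Q (f u)) -> (forall u, dg u ^ 2 = Q (g u)) ->
  f 0 = g 0 -> forall u, f u = g u.
Proof.
  intros Hd HQ Hf Hg Hdf Hdg Ef Eg H0 u.
  set (D := fun t => (f t - g t) ^ 2).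
  set (dD := fun t => 2 * (f t - g t) * (df t - dg t)).
  assert (HD : forall t, is_derive D t (dD t)).
  { intros t. unfold D, dD.
    replace (2 * (f t - g t) * (df t - dg t))
      with (INR 2 * (df t - dg t) * (f t - g t) ^ (pred 2)) by (simpl; ring).
    apply (is_derive_pow (fun t => f t - g t)).
    apply (is_derive_minus f g); auto. }
  assert (Hbound : forall t, Rabs (dD t) <= K / d * D t).
  { intros t. unfold dD, D.
    pose proof (neg_sqr_gap _ _ d (Rlt_le _ _ Hd) (Hdf t) (Hdg t)) as Hgap.
    rewrite Ef, Eg in Hgap.
    pose proof (HQ (f t) (g t)) as HQt.
    assert (Hsq : Rabs (f t - g t) * Rabs (f t - g t) = (f t - g t) ^ 2)
      by (rewrite <- Rabs_mult, Rabs_pos_eq; [ring | apply Rle_0_sqr]).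
    rewrite !Rabs_mult, (Rabs_pos_eq 2) by lra.
    apply (Rmult_le_reg_r d); [exact Hd|].
    replace (K / d * (f t - g t) ^ 2 * d) with (K * (f t - g t) ^ 2) by (field; lra).
    assert (2 * d * Rabs (df t - dg t) * Rabs (f t - g t)
            <= K * Rabs (f t - g t) * Rabs (f t - g t))
      by (apply Rmult_le_compat_r; [apply Rabs_pos | lra]).
    rewrite <- Hsq. lra. }
  assert (HD0 : D u = 0).
  { apply (gronwall_zero D dD (K / d)); auto.
    - intros t. unfold D. apply pow2_ge_0.
    - unfold D. rewrite H0. ring. }
  unfold D in HD0. rewrite <- Rsqr_pow2 in HD0. apply Rsqr_eq_0 in HD0. lra.
Qed.

Lemma cos_lipschitz (x y : R) : Rabs (cos x - cos y) <= Rabs (x - y).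
Proof.
  destruct (MVT_gen cos y x (fun t => - sin t)) as [c [_ Hc]].
  - intros t _. auto_derive; auto; ring.
  - intros t _. apply continuity_cos.
  - rewrite Hc, Rabs_mult, Rabs_Ropp.
    assert (Rabs (sin c) <= 1) by (apply Rabs_le, SIN_bound).
    pose proof (Rabs_pos (x - y)). nra.
Qed.

Lemma Omega_cos_double_gt (alpha theta : R) :
  Omega alpha theta -> 1 - 2 * alpha ^ 2 < cos (2 * theta).
Proof.
  intros [Ha Ht]. unfold theta_plus in Ht.
  destruct (Rlt_dec 1 alpha) as [H1|H1].
  - pose proof (COS_bound (2 * theta)). nra.
  - assert (Hx : -1 <= 1 - 2 * alpha ^ 2 <= 1) by nra.
    pose proof (acos_bound (1 - 2 * alpha ^ 2)).
    rewrite <- (cos_acos (1 - 2 * alpha ^ 2) Hx).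
    destruct (Rle_dec 0 theta).
    + apply cos_decreasing_1; lra.
    + rewrite <- (cos_neg (2 * theta)). apply cos_decreasing_1; lra.
Qed.

Lemma P_at_lower_bound (alpha theta : R) : Omega alpha theta ->
  exists m, 0 < m /\ forall x, -1 <= x <= 1 -> m <= P_at alpha theta x.
Proof.
  intros HO. pose proof (Omega_cos_double_gt _ _ HO) as Hc. destruct HO as [Ha _].
  set (c := cos (2 * theta)) in *. set (s := sin (2 * theta)).
  set (C := C_at alpha theta).
  assert (Hsc : s ^ 2 + c ^ 2 = 1)
    by (pose proof (sin2_cos2 (2 * theta)); unfold Rsqr in *; unfold s, c; lra).
  assert (HC : C ^ 2 * (4 * alpha ^ 2) = s ^ 2) by (unfold C, C_at; fold s; field; lra).
  pose proof (COS_bound (2 * theta)) as Hcb. fold c in Hcb.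
  set (P1 := alpha ^ 2 + c - C ^ 2).
  assert (HP1 : 0 < P1).
  { assert (P1 * (4 * alpha ^ 2) = (2 * alpha ^ 2 + c) ^ 2 - 1) by (unfold P1; nra).
    nra. }
  exists (Rmin (alpha ^ 2) P1). split; [apply Rmin_glb_lt; nra|].
  intros x Hx. unfold P_at. fold c C.
  set (t := x ^ 2).
  replace (x ^ 4) with (t * t) by (unfold t; ring).
  assert (Ht : 0 <= t <= 1) by (unfold t; nra).
  (* as a function of [t = x^2] the polynomial is concave, hence above its chord on [0, 1] *)
  assert (Hchord : (1 - t) * alpha ^ 2 + t * P1 <= alpha ^ 2 + c * t - C ^ 2 * (t * t)).
  { unfold P1. assert (0 <= C ^ 2 * (t * (1 - t))) by (apply Rmult_le_pos; nra). nra. }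
  pose proof (Rmin_l (alpha ^ 2) P1). pose proof (Rmin_r (alpha ^ 2) P1).
  nra.
Qed.

Lemma P_at_lipschitz (alpha theta : R) : exists K, 0 <= K /\
  forall a b, -1 <= a <= 1 -> -1 <= b <= 1 ->
  Rabs (P_at alpha theta a - P_at alpha theta b) <= K * Rabs (a - b).
Proof.
  set (c := cos (2 * theta)). set (C := C_at alpha theta).
  exists (2 * (Rabs c + 2 * C ^ 2)). split; [pose proof (Rabs_pos c); nra|].
  intros a b Ha Hb.
  replace (P_at alpha theta a - P_at alpha theta b)
    with ((a - b) * ((a + b) * (c - C ^ 2 * (a ^ 2 + b ^ 2))))
    by (unfold P_at; fold c C; ring).
  rewrite Rabs_mult, Rmult_comm.
  apply Rmult_le_compat_r; [apply Rabs_pos|].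
  rewrite Rabs_mult.
  apply Rmult_le_compat; try apply Rabs_pos.
  - apply Rabs_le. lra.
  - apply Rabs_le. pose proof (Rabs_pos c). pose proof (Rle_abs c). pose proof (Rle_abs (- c)).
    rewrite Rabs_Ropp in *.
    assert (0 <= C ^ 2) by apply pow2_ge_0.
    assert (0 <= a ^ 2 + b ^ 2 <= 2) by nra.
    assert (0 <= C ^ 2 * (a ^ 2 + b ^ 2) <= 2 * C ^ 2) by (split; nra).
    lra.
Qed.

Lemma P_at_opp (alpha theta x : R) : P_at alpha theta (- x) = P_at alpha theta x.
Proof. unfold P_at. ring. Qed.

Lemma P_at_cos_lipschitz (alpha theta : R) : exists K,
  forall x y, Rabs (P_at alpha theta (cos x) - P_at alpha theta (cos y)) <= K * Rabs (x - y).
Proof.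
  destruct (P_at_lipschitz alpha theta) as [K [HK HP]].
  exists K. intros x y.
  eapply Rle_trans; [apply HP; apply COS_bound|].
  apply Rmult_le_compat_l; [exact HK | apply cos_lipschitz].
Qed.

Theorem lemma4p2 (alpha theta : R) (phi dphi : R -> R) :
  Omega alpha theta ->
  (forall u, is_derive phi u (dphi u)) ->
  (forall u, (dphi u) ^ 2 = P_at alpha theta (cos (phi u))) ->
  phi 0 = 0 ->
  dphi 0 <= 0 ->
  (forall u, dphi u < 0) /\
  ((forall u v, u < v -> phi v < phi u) /\ (forall y, exists u, phi u = y)) /\
  (exists U, 0 < U /\ forall u, phi (u + U) = phi u - PI) /\
  (forall u, phi (- u) = - phi u).
Proof.
  intros HO Hd Hsq H0 Hd0.
  destruct (P_at_lower_bound _ _ HO) as [m [Hm HPm]].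
  set (d := sqrt m).
  assert (Hd_pos : 0 < d) by (apply sqrt_lt_R0, Hm).
  assert (Hsteep : forall u, dphi u <= - d).
  { apply (derive_steep phi dphi m 0 Hd Hm); [|exact Hd0].
    intros u. rewrite Hsq. apply HPm, COS_bound. }
  assert (Hdecr : forall u v, u < v -> phi v < phi u).
  { intros u v Huv. pose proof (steep_slope phi dphi d Hd Hsteep u v (Rlt_le _ _ Huv)). nra. }
  pose proof (steep_surjective phi dphi d Hd_pos Hd Hsteep) as Hsurj.
  destruct (P_at_cos_lipschitz alpha theta) as [K HK].
  set (Q := fun y => P_at alpha theta (cos y)).
  split; [intros u; specialize (Hsteep u); lra|].
  split; [split; assumption|]. split.
  - destruct (Hsurj (- PI)) as [U HU].
    assert (HU_pos : 0 < U).
    { destruct (Rlt_or_le 0 U) as [|HU0]; [assumption|].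
      assert (phi 0 <= phi U) by (destruct HU0 as [HU0| ->]; [apply Rlt_le, Hdecr|]; lra).
      pose proof PI_RGT_0. lra. }
    exists U. split; [exact HU_pos|].
    intros u. enough (phi (u + U) + PI = phi u) by lra.
    apply (steep_solutions_unique Q K d (fun t => phi (t + U) + PI) (fun t => dphi (t + U))
             phi dphi); auto.
    + intros t. apply is_derive_shift_add, Hd.
    + intros t. unfold Q. rewrite Hsq, neg_cos, P_at_opp. reflexivity.
    + rewrite Rplus_0_l, HU, H0. ring.
  - intros u. enough (- phi (- u) = phi u) by lra.
    apply (steep_solutions_unique Q K d (fun t => - phi (- t)) (fun t => dphi (- t))
             phi dphi); auto.
    + intros t. apply is_derive_opp_comp_opp, Hd.
    + intros t. unfold Q. rewrite Hsq, cos_neg. reflexivity.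
    + rewrite Ropp_0, H0. ring.
Qed.
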